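(* Let $(\mathfrak{h},\langle\cdot,\cdot\rangle)$ be a Kundt pair on $\mathfrak{e}_0(2)$. Then it is equivalent to $(\mathfrak{h}_0,\langle\cdot,\cdot\rangle_0)$ where the matrix of $\langle\cdot,\cdot\rangle_0$ in the basis $(X_1,X_2,X_3)$ is $\begin{pmatrix}0&1&0\\1&0&0\\0&0&\mu\end{pmatrix}$ with $\mu>0$, and $\mathfrak{h}_0=\mathrm{span}\{X_2,X_3\}$.
   Context: $\mathfrak{e}_0(2)$ has basis $(X_1,X_2,X_3)$ with only nonzero brackets $[X_1,X_2]=X_3$, $[X_1,X_3]=-X_2$. For a Lorentzian scalar product $\langle\cdot,\cdot\rangle$ on a Lie algebra $\mathfrak{g}$, the Levi-Civita product is defined by $2\langle u\bullet v,w\rangle=\langle[u,v],w\rangle+\langle[w,u],v\rangle+\langle[w,v],u\rangle$. A Kundt pair on $\mathfrak{g}$ is a pair consisting of a Lorentzian scalar product $\langle\cdot,\cdot\rangle$ and a codimension one subalgebra $\mathfrak{h}$ which is $\langle\cdot,\cdot\rangle$-degenerate, stable by $\bullet$, and such that $e\bullet e=0$ for all $e\in\mathfrak{h}^\perp$. Two Kundt pairs $(\mathfrak{h}_1,\langle\cdot,\cdot\rangle_1)$, $(\mathfrak{h}_2,\langle\cdot,\cdot\rangle_2)$ are equivalent if there is a Lie algebra automorphism $\phi$ of $\mathfrak{g}$ with $\phi(\mathfrak{h}_1)=\mathfrak{h}_2$ and $\phi^*\langle\cdot,\cdot\rangle_2=\langle\cdot,\cdot\rangle_1$. *)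

(* The Lie algebra e_0(2) is R^3 (row vectors 'rV[R]_3) with
   basis X1 = 'e_0, X2 = 'e_1, X3 = 'e_2. *)
From mathcomp Require Import all_boot all_order all_algebra.
From mathcomp Require Import reals.
Set Implicit Arguments. Unset Strict Implicit. Unset Printing Implicit Defensive.
Import Order.TTheory GRing.Theory Num.Theory.
Local Open Scope ring_scope.

Section E02.
Variable R : realType.
Notation vec := 'rV[R]_3.

Definition i0 : 'I_3 := ord0.
Definition i1 : 'I_3 := inord 1.
Definition i2 : 'I_3 := inord 2.

(* Lie bracket of e_0(2): [X1,X2] = X3, [X1,X3] = -X2, [X2,X3] = 0 *)
Definition e02_bracket (u v : vec) : vec :=
  \row_(k < 3)
    (if k == i1 then - (u 0 i0 * v 0 i2 - u 0 i2 * v 0 i0)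
     else if k == i2 then u 0 i0 * v 0 i1 - u 0 i1 * v 0 i0
     else 0).

Definition form (S : 'M[R]_3) (u v : vec) : R := (u *m S *m v^T) 0 0.

Definition lorentzian (S : 'M[R]_3) : Prop :=
  S^T = S /\
  exists P : 'M[R]_3, P \in unitmx /\
    P *m S *m P^T = diag_mx (\row_(k < 3) (if k == i0 then -1 else 1)).

(* right hand side of the Koszul formula defining the Levi-Civita product *)
Definition koszul (S : 'M[R]_3) (u v w : vec) : R :=
  form S (e02_bracket u v) w + form S (e02_bracket w u) v
  + form S (e02_bracket w v) u.

(* Levi-Civita product: the unique u.v with 2<u.v,w> = koszul u v w for all w
   (S nondegenerate). *)
Definition lc_prod (S : 'M[R]_3) (u v : vec) : vec :=
  (2%:R^-1 *: (\row_(j < 3) koszul S u v (delta_mx 0 j))) *m invmx S.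

(* subspaces of R^3 are represented by row spaces of matrices (mxalgebra) *)
Definition is_subalgebra (h : 'M[R]_3) : Prop :=
  forall u v : vec, (u <= h)%MS -> (v <= h)%MS -> (e02_bracket u v <= h)%MS.

Definition in_orth (S h : 'M[R]_3) (e : vec) : Prop :=
  forall v : vec, (v <= h)%MS -> form S e v = 0.

Definition kundt_pair (h S : 'M[R]_3) : Prop :=
  lorentzian S /\
  \rank h = 2%N /\
  is_subalgebra h /\
  (exists u : vec, [/\ (u <= h)%MS, u != 0 & in_orth S h u]) /\ (* degenerate *)
  (forall u v : vec, (u <= h)%MS -> (v <= h)%MS -> (lc_prod S u v <= h)%MS) /\
  (forall e : vec, in_orth S h e -> lc_prod S e e = 0).

Definition e02_aut (P : 'M[R]_3) : Prop :=
  P \in unitmx /\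
  forall u v : vec, e02_bracket (u *m P) (v *m P) = e02_bracket u v *m P.

(* (h1,S1) ~ (h2,S2) via phi : phi(h1) = h2 and phi^* <,>_2 = <,>_1 *)
Definition kundt_equiv (h1 S1 h2 S2 : 'M[R]_3) : Prop :=
  exists P : 'M[R]_3, [/\ e02_aut P, (h1 *m P == h2)%MS & P *m S2 *m P^T = S1].

Definition S0 (mu : R) : 'M[R]_3 :=
  \matrix_(i < 3, j < 3)
    (if ((i == i0) && (j == i1)) || ((i == i1) && (j == i0)) then 1
     else if (i == i2) && (j == i2) then mu else 0).

Definition h0 : 'M[R]_3 := delta_mx i1 i1 + delta_mx i2 i2.

End E02.

From Pilot Require Import Defs.
From mathcomp Require Import all_boot all_order all_algebra.
From mathcomp Require Import reals.
From mathcomp Require Import ring.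
Import Order.TTheory GRing.Theory Num.Theory.
Local Open Scope ring_scope.

(* A two-dimensional subalgebra of e_0(2) is the abelian ideal h0 = <X2, X3>:
   otherwise it contains some v with a nonzero X1-component and some nonzero w
   in h0, and v, w, [v, w] span everything because ad v acts on h0 as a nonzero
   multiple of a rotation.  A null vector u of h0 orthogonal to h0 pairs
   nontrivially with X1, and the metric restricted to h0 is a multiple of the
   square of a linear form vanishing on u, a positive one because h0 meets
   every spacelike plane.  The automorphisms X1 |-> X1 + a X2 + b X3 composed
   with a similarity (p, q) of <X2, X3> then have just enough freedom to bring
   the metric to S0 mu. *)

Section KundtPairsE02.
Set Implicit Arguments.
Unset Strict Implicit.
Variable R : realType.
Notation vec := 'rV[R]_3.

Lemma i1E : i1 = lift ord0 ord0 :> 'I_3.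
Proof. by apply/val_inj; rewrite /= inordK. Qed.

Lemma i2E : i2 = lift ord0 (lift ord0 ord0) :> 'I_3.
Proof. by apply/val_inj; rewrite /= inordK. Qed.

Lemma ord3P (k : 'I_3) : [\/ k = i0, k = i1 | k = i2].
Proof.
case: k => [[|[|[|k]]] lt_k3] //.
- by constructor 1; apply/val_inj.
- by constructor 2; apply/val_inj; rewrite /= inordK.
- by constructor 3; apply/val_inj; rewrite /= inordK.
Qed.

Lemma ord3_neqE :
  ((i0 == i1) = false) * ((i0 == i2) = false) * ((i1 == i0) = false)
  * ((i1 == i2) = false) * ((i2 == i0) = false) * ((i2 == i1) = false).
Proof. by rewrite i1E i2E. Qed.

Definition ord3_eqE := (eqxx, ord3_neqE).

Lemma sum3 (F : 'I_3 -> R) : \sum_(k < 3) F k = F i0 + F i1 + F i2.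
Proof. by rewrite !big_ord_recl big_ord0 i1E i2E addr0 addrA. Qed.

Lemma row3P (v w : vec) :
  v 0 i0 = w 0 i0 -> v 0 i1 = w 0 i1 -> v 0 i2 = w 0 i2 -> v = w.
Proof. by move=> e0 e1 e2; apply/rowP => k; case: (ord3P k) => ->. Qed.

Lemma sqr_norm2_eq0 (x y : R) : (x ^+ 2 + y ^+ 2 == 0) = (x == 0) && (y == 0).
Proof. by rewrite paddr_eq0 ?sqr_ge0 // !sqrf_eq0. Qed.

Lemma h0_norm2_eq0 (w : vec) :
  w 0 i0 = 0 -> (w 0 i1 ^+ 2 + w 0 i2 ^+ 2 == 0) = (w == 0).
Proof.
move=> w0; rewrite sqr_norm2_eq0; apply/andP/eqP => [[/eqP w1 /eqP w2]|->].
  by apply: row3P; rewrite mxE.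
by rewrite !mxE.
Qed.

Lemma sub_h0 (w : vec) : (w <= h0 R)%MS = (w 0 i0 == 0).
Proof.
apply/idP/eqP => [/submxP[x ->]|w0].
  by rewrite !mxE sum3 !mxE !ord3_eqE /=; ring.
have -> : w = w *m h0 R; last exact: submxMl.
by apply: row3P; rewrite !mxE sum3 !mxE !ord3_eqE /= ?w0; ring.
Qed.

Lemma e02_bracket_row_full (h : 'M[R]_3) (v w : vec) :
  v 0 i0 != 0 -> w 0 i0 = 0 -> w != 0 ->
  (v <= h)%MS -> (w <= h)%MS -> (e02_bracket v w <= h)%MS -> row_full h.
Proof.
move=> v0 w0 nz_w vh wh zh; rewrite -sub1mx.
suff sub_h (x : vec) : (x <= h)%MS by apply/row_subP => i; apply: sub_h.
have N0 : w 0 i1 ^+ 2 + w 0 i2 ^+ 2 != 0 by rewrite h0_norm2_eq0.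
pose a := x 0 i0 / v 0 i0.
pose y1 := x 0 i1 - a * v 0 i1; pose y2 := x 0 i2 - a * v 0 i2.
pose b := (w 0 i1 * y1 + w 0 i2 * y2) / (w 0 i1 ^+ 2 + w 0 i2 ^+ 2).
pose c := (w 0 i1 * y2 - w 0 i2 * y1) / (v 0 i0 * (w 0 i1 ^+ 2 + w 0 i2 ^+ 2)).
have -> : x = a *: v + b *: w + c *: e02_bracket v w.
  by apply: row3P; rewrite !mxE !ord3_eqE /= w0 /c /b /y1 /y2 /a; field;
     rewrite N0 v0.
by rewrite !addmx_sub ?scalemx_sub.
Qed.

Lemma subalgebra_rank2_sub_h0 (h : 'M[R]_3) :
  is_subalgebra h -> \rank h = 2 -> (h <= h0 R)%MS.
Proof.
move=> sub_h rk_h; apply/row_subP => i; rewrite sub_h0; apply: contraT => v0.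
set v := row i h in v0.
have vh : (v <= h)%MS by apply: row_sub.
have /row_subPn[j rj] : ~~ (h <= v)%MS.
  by apply: contraL (rank_leq_row v) => /mxrankS; rewrite rk_h -ltnNge.
set r := row j h in rj.
have rh : (r <= h)%MS by apply: row_sub.
clearbody v r; pose w := r - (r 0 i0 / v 0 i0) *: v.
have wh : (w <= h)%MS by rewrite addmx_sub ?eqmx_opp ?scalemx_sub.
have w0 : w 0 i0 = 0 by rewrite !mxE; field.
have nz_w : w != 0.
  by apply: contra rj; rewrite /w subr_eq0 => /eqP->; rewrite scalemx_sub.
have := e02_bracket_row_full v0 w0 nz_w vh wh (sub_h _ _ vh wh).
by rewrite /row_full rk_h.
Qed.

Lemma subalgebra_rank2_eq_h0 (h : 'M[R]_3) :
  is_subalgebra h -> \rank h = 2 -> (h == h0 R)%MS.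
Proof.
move=> sub_h rk_h; have hh0 := subalgebra_rank2_sub_h0 sub_h rk_h.
have rk_h0 : (\rank (h0 R) <= 2)%N.
  rewrite -ltnS ltn_neqAle rank_leq_col andbT.
  have : ~~ ((delta_mx 0 i0 : vec) <= h0 R)%MS.
    by rewrite sub_h0 mxE !eqxx oner_eq0.
  by apply: contraNneq => full; apply: submx_full; rewrite /row_full full.
by rewrite -(mxrank_leqif_eq hh0).2 eqn_leq mxrankS //= rk_h.
Qed.

Lemma form_deltar (S : 'M[R]_3) (x : vec) (j : 'I_3) :
  Defs.form S x (delta_mx 0 j) = (x *m S) 0 j.
Proof.
rewrite /Defs.form mxE sum3 !mxE.
by case: (ord3P j) => ->; rewrite !ord3_eqE /=; ring.
Qed.

Lemma mulmx_h0E (S : 'M[R]_3) (x : vec) (j : 'I_3) : x 0 i0 = 0 ->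
  (x *m S) 0 j = x 0 i1 * S i1 j + x 0 i2 * S i2 j.
Proof. by move=> x0; rewrite mxE sum3 x0; ring. Qed.

Lemma form_h0E (S : 'M[R]_3) (x : vec) : S i2 i1 = S i1 i2 -> x 0 i0 = 0 ->
  Defs.form S x x =
  S i1 i1 * x 0 i1 ^+ 2 + 2 * S i1 i2 * x 0 i1 * x 0 i2 + S i2 i2 * x 0 i2 ^+ 2.
Proof.
by move=> S21 x0; rewrite /Defs.form mxE sum3 !mxE !sum3 x0 S21; ring.
Qed.

Lemma lorentzian_sym (S : 'M[R]_3) : lorentzian S -> forall i j, S i j = S j i.
Proof. by case=> S_sym _ i j; rewrite -{1}S_sym mxE. Qed.

Lemma lorentzian_unitmx (S : 'M[R]_3) : lorentzian S -> S \in unitmx.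
Proof.
case=> _ [P [_ PSP]].
have : P *m S *m P^T \in unitmx.
  rewrite PSP unitmxE det_diag !big_ord_recl big_ord0 !mxE /=.
  by rewrite !mul1r mulN1r unitrN unitr1.
by rewrite !unitmx_mul => /andP[/andP[_ ->]].
Qed.

Lemma lorentzian_pos_h0 (S : 'M[R]_3) : lorentzian S ->
  exists2 v : vec, v 0 i0 = 0 & 0 < Defs.form S v v.
Proof.
case=> _ [P [_ PSP]].
(* The rows P_1, P_2 span a spacelike plane, which meets h0 nontrivially. *)
have formP (w : vec) : w 0 i0 = 0 ->
    Defs.form S (w *m P) (w *m P) = w 0 i1 ^+ 2 + w 0 i2 ^+ 2.
  move=> w0; rewrite /Defs.form trmx_mul.
  have -> : w *m P *m S *m (P^T *m w^T) = w *m (P *m S *m P^T) *m w^T.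
    by rewrite !mulmxA.
  by rewrite PSP mxE sum3 !mxE !sum3 !mxE !ord3_eqE /= w0; ring.
pose w : vec :=
  \row_k (if k == i1 then P i2 i0 else if k == i2 then - P i1 i0 else 0).
have [P_0|nz_P] := eqVneq (P i1 i0 ^+ 2 + P i2 i0 ^+ 2) 0.
- move/eqP: P_0; rewrite sqr_norm2_eq0 => /andP[/eqP P10 /eqP P20].
  exists (delta_mx 0 i1 *m P).
    by rewrite mxE sum3 !mxE !ord3_eqE /= P10 P20; ring.
  by rewrite formP ?mxE ?ord3_eqE //= expr1n expr0n addr0 ltr01.
- exists (w *m P).
    by rewrite mxE sum3 !mxE !ord3_eqE /=; ring.
  rewrite formP ?mxE ?ord3_eqE //= sqrrN addrC lt_def nz_P.
  by rewrite addr_ge0 ?sqr_ge0.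
Qed.

Section DegenerateBinaryForm.
Variables s11 s12 s22 u1 u2 : R.
Hypothesis ker1 : u1 * s11 + u2 * s12 = 0.
Hypothesis ker2 : u1 * s12 + u2 * s22 = 0.

Lemma ker_sym2_rank1 :
  [/\ s11 * (u1 ^+ 2 + u2 ^+ 2) = (s11 + s22) * u2 ^+ 2,
      s12 * (u1 ^+ 2 + u2 ^+ 2) = - ((s11 + s22) * u1 * u2)
    & s22 * (u1 ^+ 2 + u2 ^+ 2) = (s11 + s22) * u1 ^+ 2].
Proof.
split; apply/eqP; rewrite -subr_eq0; apply/eqP.
- transitivity (u1 * (u1 * s11 + u2 * s12) - u2 * (u1 * s12 + u2 * s22)).
    by ring.
  by rewrite ker1 ker2; ring.
- transitivity (u1 * (u1 * s12 + u2 * s22) + u2 * (u1 * s11 + u2 * s12)).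
    by ring.
  by rewrite ker1 ker2; ring.
- transitivity (u2 * (u1 * s12 + u2 * s22) - u1 * (u1 * s11 + u2 * s12)).
    by ring.
  by rewrite ker1 ker2; ring.
Qed.

Hypothesis nz_u : u1 ^+ 2 + u2 ^+ 2 != 0.

Lemma ker_sym2_trace_gt0 (v1 v2 : R) :
  0 < s11 * v1 ^+ 2 + 2 * s12 * v1 * v2 + s22 * v2 ^+ 2 -> 0 < s11 + s22.
Proof.
move=> Q_gt0; have [r11 r12 r22] := ker_sym2_rank1.
have NQ : (u1 ^+ 2 + u2 ^+ 2)
          * (s11 * v1 ^+ 2 + 2 * s12 * v1 * v2 + s22 * v2 ^+ 2)
          = (s11 + s22) * (u2 * v1 - u1 * v2) ^+ 2.
  transitivity (s11 * (u1 ^+ 2 + u2 ^+ 2) * v1 ^+ 2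
     + 2 * (s12 * (u1 ^+ 2 + u2 ^+ 2)) * v1 * v2
     + s22 * (u1 ^+ 2 + u2 ^+ 2) * v2 ^+ 2); first by ring.
  by rewrite r11 r12 r22; ring.
have N_gt0 : 0 < u1 ^+ 2 + u2 ^+ 2 by rewrite lt_def nz_u addr_ge0 ?sqr_ge0.
rewrite ltNge; apply/negP => T_le0.
have := mulr_gt0 N_gt0 Q_gt0.
by rewrite NQ ltNge mulr_le0_ge0 ?sqr_ge0.
Qed.

(* [(p, -q)] must span the kernel, the factor [c] is then fixed by the entries
   [s01] and [s02], and [mu], [b], [a] are read off. *)
Lemma ker_sym2_normal_form (s00 s01 s02 : R) :
  u1 * s01 + u2 * s02 != 0 -> 0 < s11 + s22 ->
  exists mu a b p q : R, [/\ 0 < mu, s00 = 2 * a + mu * b ^+ 2,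
    s01 = p + mu * b * q, s02 = - q + mu * b * p &
    [/\ s11 = mu * q ^+ 2, s12 = mu * q * p & s22 = mu * p ^+ 2]].
Proof.
move=> nz_D T_gt0; have [r11 r12 r22] := ker_sym2_rank1.
pose c := (u1 * s01 + u2 * s02) / (u1 ^+ 2 + u2 ^+ 2).
have nz_c : c != 0 by rewrite mulf_neq0 ?invr_eq0.
pose p := c * u1; pose q := - (c * u2).
pose mu := (s11 + s22) / ((u1 ^+ 2 + u2 ^+ 2) * c ^+ 2).
pose b := (q * s01 + p * s02) / (mu * (p ^+ 2 + q ^+ 2)).
have pq : p ^+ 2 + q ^+ 2 = c ^+ 2 * (u1 ^+ 2 + u2 ^+ 2) by rewrite /p /q; ring.
have nz_pq : p ^+ 2 + q ^+ 2 != 0 by rewrite pq mulf_neq0 ?sqrf_eq0.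
have pqs : p * s01 - q * s02 = p ^+ 2 + q ^+ 2 by rewrite pq /p /q /c; field.
have mu_gt0 : 0 < mu.
  by rewrite divr_gt0 // mulr_gt0 ?lt_def ?sqrf_eq0 ?nz_u ?nz_c
            ?addr_ge0 ?sqr_ge0.
have mub : mu * b * (p ^+ 2 + q ^+ 2) = q * s01 + p * s02.
  by rewrite /b; field; rewrite -/q nz_pq (gt_eqF mu_gt0).
exists mu, ((s00 - mu * b ^+ 2) / 2), b, p, q; split => //.
- by field.
- apply: (mulIf nz_pq).
  transitivity (p * (p * s01 - q * s02) + q * (q * s01 + p * s02)).
    by ring.
  by rewrite pqs -mub; ring.
- apply: (mulIf nz_pq).
  transitivity (p * (q * s01 + p * s02) - q * (p * s01 - q * s02)).
    by ring.
  by rewrite pqs -mub; ring.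
- split; apply: (mulIf nz_u).
  + by rewrite r11 /mu /q; field; rewrite nz_u nz_c.
  + by rewrite r12 /mu /q /p; field; rewrite nz_u nz_c.
  + by rewrite r22 /mu /p; field; rewrite nz_u nz_c.
Qed.

End DegenerateBinaryForm.

Definition e02_aut_mx (a b p q : R) : 'M[R]_3 := \matrix_(i < 3, j < 3)
  (if i == i0 then (if j == i0 then 1 else if j == i1 then a else b)
   else if i == i1 then (if j == i0 then 0 else if j == i1 then p else q)
   else (if j == i0 then 0 else if j == i1 then - q else p)).

Lemma e02_aut_mx_bracket (a b p q : R) (u v : vec) :
  e02_bracket (u *m e02_aut_mx a b p q) (v *m e02_aut_mx a b p q)
  = e02_bracket u v *m e02_aut_mx a b p q.
Proof.
by apply: row3P; rewrite !mxE !sum3 !mxE !ord3_eqE /=; ring.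
Qed.

Lemma e02_aut_mx_h0 (a b p q : R) :
  e02_aut_mx a b p q \in unitmx -> (h0 R *m e02_aut_mx a b p q == h0 R)%MS.
Proof.
move=> P_unit; have sub_hP : (h0 R *m e02_aut_mx a b p q <= h0 R)%MS.
  apply/row_subP => i; rewrite row_mul sub_h0 mxE sum3 !mxE !ord3_eqE /=.
  by rewrite !andbF !andbT addr0 !mulr0 mulr1 !addr0.
by rewrite -(mxrank_leqif_eq sub_hP).2 mxrankMfree ?row_free_unit.
Qed.

Lemma e02_aut_mx_S0 (mu a b p q : R) (S : 'M[R]_3) :
  (forall i j, S i j = S j i) ->
  S i0 i0 = 2 * a + mu * b ^+ 2 -> S i0 i1 = p + mu * b * q ->
  S i0 i2 = - q + mu * b * p -> S i1 i1 = mu * q ^+ 2 ->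
  S i1 i2 = mu * q * p -> S i2 i2 = mu * p ^+ 2 ->
  e02_aut_mx a b p q *m S0 mu *m (e02_aut_mx a b p q)^T = S.
Proof.
move=> S_sym e00 e01 e02 e11 e12 e22.
apply/matrixP => i j; rewrite !mxE sum3 !mxE !sum3 !mxE !ord3_eqE /=.
case: (ord3P i) => ->; case: (ord3P j) => ->;
  rewrite !ord3_eqE /= ?(S_sym i1 i0) ?(S_sym i2 i0) ?(S_sym i2 i1)
    ?e00 ?e01 ?e02 ?e11 ?e12 ?e22; ring.
Qed.

Lemma degenerate_h0_normal_form (S : 'M[R]_3) (u : vec) :
  lorentzian S -> u != 0 -> (u <= h0 R)%MS -> in_orth S (h0 R) u ->
  exists2 mu : R, 0 < mu &
    exists a b p q : R,
      e02_aut_mx a b p q *m S0 mu *m (e02_aut_mx a b p q)^T = S.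
Proof.
move=> S_lor nz_u; rewrite sub_h0 => /eqP u0 u_orth.
have S_sym := lorentzian_sym S_lor.
have uS j : j != i0 -> (u *m S) 0 j = 0.
  move=> nj0; rewrite -form_deltar; apply: u_orth.
  by rewrite sub_h0 mxE eqxx [i0 == _]eq_sym (negbTE nj0).
have ker1 : u 0 i1 * S i1 i1 + u 0 i2 * S i1 i2 = 0.
  by rewrite -(S_sym i2 i1) -mulmx_h0E // uS ?ord3_eqE.
have ker2 : u 0 i1 * S i1 i2 + u 0 i2 * S i2 i2 = 0.
  by rewrite -mulmx_h0E // uS ?ord3_eqE.
have nz_N : u 0 i1 ^+ 2 + u 0 i2 ^+ 2 != 0 by rewrite h0_norm2_eq0.
have nz_D : u 0 i1 * S i0 i1 + u 0 i2 * S i0 i2 != 0.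
  rewrite (S_sym i0 i1) (S_sym i0 i2) -mulmx_h0E //.
  apply: contra nz_u => /eqP uS0.
  have : u *m S = 0 by apply: row3P; rewrite ?uS0 ?uS ?ord3_eqE ?mxE.
  move/(congr1 (mulmx^~ (invmx S))).
  by rewrite mulmxK ?lorentzian_unitmx // mul0mx => ->.
have T_gt0 : 0 < S i1 i1 + S i2 i2.
  have [v v0 Sv_gt0] := lorentzian_pos_h0 S_lor.
  move: Sv_gt0; rewrite (form_h0E (S_sym i2 i1) v0).
  exact: (ker_sym2_trace_gt0 ker1 ker2 nz_N).
have [mu [a [b [p [q [mu_gt0 e00 e01 e02 [e11 e12 e22]]]]]]] :=
  ker_sym2_normal_form ker1 ker2 nz_N (S i0 i0) nz_D T_gt0.
by exists mu => //; exists a, b, p, q; apply: e02_aut_mx_S0.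
Qed.

End KundtPairsE02.

Theorem theorem5p5 (R : realType) (h S : 'M[R]_3) :
  kundt_pair h S -> exists2 mu : R, 0 < mu & kundt_equiv h S (h0 R) (S0 mu).
Proof.
case=> S_lor [rk_h [sub_h [[u [uh nz_u u_orth]] _]]].
have /eqmxP h_h0 := subalgebra_rank2_eq_h0 sub_h rk_h.
have uh0 : (u <= h0 R)%MS by rewrite -h_h0.
have u_orth0 : in_orth S (h0 R) u by move=> v; rewrite -h_h0; apply: u_orth.
have [mu mu_gt0 [a [b [p [q PSP]]]]] :=
  degenerate_h0_normal_form S_lor nz_u uh0 u_orth0.
have P_unit : e02_aut_mx a b p q \in unitmx.
  have := lorentzian_unitmx S_lor.
  by rewrite -PSP !unitmx_mul => /andP[/andP[->]].
exists mu => //; exists (e02_aut_mx a b p q); split => //.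
- by split => // x y; apply: e02_aut_mx_bracket.
- apply/eqmxP; apply: eqmx_trans (eqmxMr _ h_h0) _.
  exact/eqmxP/e02_aut_mx_h0.
Qed.
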